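(* Let $T_l$ be a $2m$ deck-shuffler IET. Then $H_l$ is non-decreasing and has only finitely many plateaus, i.e. there are only finitely many $z\in[0,1)$ for which $H_l^{-1}(\{z\})$ is an interval of positive length.
   Context: A $2m$ deck-shuffler IET $T_l$ is the map $[0,1)\to[0,1)$ determined by a length vector $l$ giving a partition of $[0,1)$ into consecutive left-closed right-open intervals $A_1<\dots<A_m<B_1<\dots<B_m$ of positive lengths, with $T_l(x)=x+|B_1|+\dots+|B_i|$ for $x\in A_i$ and $T_l(x)=x-|A_i|-\dots-|A_m|$ for $x\in B_i$. $B=B_1\cup\dots\cup B_m$ and $H_l(x)=\sum_{n=0}^\infty \chi_B(T_l^n x)/2^{n+1}$. *)

From Stdlib Require Import Reals ClassicalEpsilon.
From Coquelicot Require Import Coquelicot.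
Open Scope R_scope.

Fixpoint rsum (f : nat -> R) (n : nat) : R :=
  match n with
  | O => 0
  | S k => rsum f k + f k
  end.

(* A length vector for a 2m deck shuffler: a i = |A_(i+1)|, b i = |B_(i+1)|
   for i = 0 .. m-1 (0-indexed). *)
Definition length_vector (m : nat) (a b : nat -> R) : Prop :=
  (1 <= m)%nat /\
  (forall i, (i < m)%nat -> 0 < a i) /\
  (forall i, (i < m)%nat -> 0 < b i) /\
  rsum a m + rsum b m = 1.

Definition leftA (a : nat -> R) (i : nat) : R := rsum a i.
Definition leftB (m : nat) (a b : nat -> R) (i : nat) : R := rsum a m + rsum b i.

Definition inA (a : nat -> R) (i : nat) (x : R) : Prop :=
  leftA a i <= x < leftA a i + a i.
Definition inB (m : nat) (a b : nat -> R) (i : nat) (x : R) : Prop :=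
  leftB m a b i <= x < leftB m a b i + b i.

Definition ind (P : Prop) : R := if excluded_middle_informative P then 1 else 0.

(* T_l(x) = x + |B_1|+...+|B_i| on A_i, x - (|A_i|+...+|A_m|) on B_i
   (0-indexed: + rsum b (i+1) on A_i, - (rsum a m - rsum a i) on B_i).
   The intervals are disjoint, so at most one summand is nonzero;
   outside [0,1) T is the identity (irrelevant). *)
Definition T (m : nat) (a b : nat -> R) (x : R) : R :=
  x + rsum (fun i => ind (inA a i x) * rsum b (S i)) m
    - rsum (fun i => ind (inB m a b i x) * (rsum a m - rsum a i)) m.

Definition chiB (m : nat) (a b : nat -> R) (x : R) : R :=
  ind (exists i, (i < m)%nat /\ inB m a b i x).

Definition H (m : nat) (a b : nat -> R) (x : R) : R :=
  Series (fun n => chiB m a b (Nat.iter n (T m a b) x) / 2 ^ (S n)).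

Definition level_set (m : nat) (a b : nat -> R) (z : R) (x : R) : Prop :=
  0 <= x < 1 /\ H m a b x = z.

Definition pos_length_interval (S : R -> Prop) : Prop :=
  (forall x y t, S x -> S y -> x <= t <= y -> S t) /\
  (exists x y, S x /\ S y /\ x < y).

(* Points with the same itinerary under [T] (the sequence of [chi_B] along the orbit) have the
   same [H], and itineraries are ordered lexicographically like the points, because [T] is a
   piecewise translation that never brings points with equal [chi_B] closer together; by
   comparison of binary expansions [H] is nondecreasing.  A plateau of [H] therefore contains
   an interval of points with one itinerary (two itineraries code the same number only as
   [..0111..] and [..1000..], so of [x <= t <= y] on a plateau, [t] shares the itinerary of
   [x] or of [y]).  The cylinders (maximal
   same-itinerary sets) along the orbit of the left end [p] of such an interval have
   nondecreasing lengths; by pigeonhole the orbit returns to a cylinder it visited, and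
   injectivity of [T] on non-growing cylinders makes [p] periodic.  If no point of its cycle
   were a breakpoint of [T], points just left of [p] would share its itinerary.  So every
   plateau value is an [H]-value on the cycle of one of the finitely many periodic
   breakpoints. *)

From Pilot Require Import Defs.
From Stdlib Require Import Reals List Lra Lia ZArith.
From Stdlib Require Import Classical ClassicalEpsilon FunctionalExtensionality PropExtensionality.
From Coquelicot Require Import Coquelicot.
Import Defs.
Open Scope R_scope.

Lemma ind_true (P : Prop) : P -> ind P = 1.
Proof. intros HP; unfold ind; destruct (excluded_middle_informative P); tauto. Qed.

Lemma ind_false (P : Prop) : ~ P -> ind P = 0.
Proof. intros HP; unfold ind; destruct (excluded_middle_informative P); tauto. Qed.

Lemma ind_0_or_1 (P : Prop) : ind P = 0 \/ ind P = 1.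
Proof. unfold ind; destruct (excluded_middle_informative P); auto. Qed.

Lemma rsum_le_mono (f : nat -> R) (n : nat) : (forall i, (i < n)%nat -> 0 < f i) ->
  forall i j, (i <= j <= n)%nat -> rsum f i <= rsum f j.
Proof.
  intros Hf i j [Hij Hjn]. induction Hij as [|j Hij IH]; [lra|].
  simpl. specialize (IH ltac:(lia)). assert (0 < f j) by (apply Hf; lia). lra.
Qed.

Lemma rsum_locate (f : nat -> R) (c x : R) (k : nat) :
  c <= x < c + rsum f k -> exists i, (i < k)%nat /\ c + rsum f i <= x < c + rsum f i + f i.
Proof.
  induction k as [|k IH]; simpl; intros Hx; [lra|].
  destruct (Rlt_le_dec x (c + rsum f k)) as [Hlt|Hge].
  - destruct (IH ltac:(lra)) as (i & Hi & Hxi). exists i; split; [lia|auto].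
  - exists k; split; [lia|lra].
Qed.

Lemma rsum_indicator_zero (P : nat -> Prop) (c : nat -> R) (n : nat) :
  (forall j, (j < n)%nat -> ~ P j) -> rsum (fun j => ind (P j) * c j) n = 0.
Proof.
  induction n as [|n IH]; intros HP; simpl; [lra|].
  rewrite IH, ind_false by (intros; apply HP; lia). lra.
Qed.

Lemma rsum_indicator_single (P : nat -> Prop) (c : nat -> R) (n i : nat) :
  (i < n)%nat -> (forall j, (j < n)%nat -> (P j <-> j = i)) ->
  rsum (fun j => ind (P j) * c j) n = c i.
Proof.
  induction n as [|n IH]; intros Hi HP; simpl; [lia|].
  destruct (Nat.eq_dec i n) as [->|Hne].
  - rewrite rsum_indicator_zero, ind_true by (try apply HP; try intros j Hj Pj;
      try (apply HP in Pj; lia); lia). lra.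
  - rewrite IH, ind_false; try lra; try lia.
    + intros Pn. apply HP in Pn; lia.
    + intros j Hj. apply HP; lia.
Qed.

Lemma pigeonhole_nat (M : nat) (f : nat -> nat) :
  (forall n, (n <= M)%nat -> (f n < M)%nat) -> exists i j, (i < j)%nat /\ f i = f j.
Proof.
  intros Hf. apply NNPP. intros Hinj.
  assert (Hnodup : NoDup (map f (seq 0 (S M)))).
  { apply NoDup_map_NoDup_ForallPairs; [|apply seq_NoDup].
    intros i j _ _ Hij. destruct (Nat.lt_trichotomy i j) as [Hlt|[Heq|Hlt]]; auto;
      exfalso; apply Hinj; eauto. }
  assert (Hincl : incl (map f (seq 0 (S M))) (seq 0 M)).
  { intros v Hv. apply in_map_iff in Hv as (n & <- & Hn). apply in_seq in Hn.
    apply in_seq. specialize (Hf n ltac:(lia)). lia. }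
  pose proof (NoDup_incl_length Hnodup Hincl) as Hlen.
  rewrite length_map, !length_seq in Hlen. lia.
Qed.

(* Sort the points into the boxes [[k l, (k+1) l)], of which at most [1/l] meet [0,1). *)
Lemma unit_interval_seq_close_pair (l : R) (q : nat -> R) :
  0 < l -> (forall n, 0 <= q n < 1) -> exists i j, (i < j)%nat /\ Rabs (q i - q j) < l.
Proof.
  intros Hl Hq.
  set (box n := Z.to_nat (Int_part (q n / l))).
  assert (Hbox : forall n, INR (box n) <= q n / l < INR (box n) + 1).
  { intros n. destruct (base_Int_part (q n / l)) as [Hlo Hhi].
    assert (0 <= q n / l) by (apply Rdiv_le_0_compat; [apply Hq|lra]).
    assert (Hnn : (0 <= Int_part (q n / l))%Z).
    { assert (Hgt : (-1 < Int_part (q n / l))%Z) by (apply lt_IZR; simpl; lra). lia. }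
    unfold box. rewrite INR_IZR_INZ, Z2Nat.id by exact Hnn. lra. }
  destruct (archimed (1 / l)) as [Hup _].
  assert (Hinv : 1 / l > 0) by (apply Rdiv_lt_0_compat; lra).
  assert (Hup0 : (0 <= up (1 / l))%Z) by (apply le_IZR; simpl; lra).
  destruct (pigeonhole_nat (Z.to_nat (up (1 / l))) box) as (i & j & Hij & Heq).
  { intros n _. apply INR_lt. rewrite (INR_IZR_INZ (Z.to_nat _)), Z2Nat.id by exact Hup0.
    specialize (Hbox n). destruct (Hq n).
    assert (q n / l < 1 / l)
      by (unfold Rdiv; apply Rmult_lt_compat_r; [apply Rinv_0_lt_compat|]; lra).
    lra. }
  exists i, j. split; [exact Hij|].
  pose proof (Hbox i) as Hi. pose proof (Hbox j) as Hj. rewrite Heq in Hi.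
  assert (Hqi : q i = l * (q i / l)) by (field; lra).
  assert (Hqj : q j = l * (q j / l)) by (field; lra).
  apply Rabs_def1; nra.
Qed.

Lemma uniform_eps_finite (K : nat) (Q : nat -> R -> Prop) :
  (forall n e e', Q n e -> 0 < e' <= e -> Q n e') ->
  (forall n, (n < K)%nat -> exists e, 0 < e /\ Q n e) ->
  exists e, 0 < e /\ forall n, (n < K)%nat -> Q n e.
Proof.
  intros Hmono. induction K as [|K IH]; intros HK.
  - exists 1. split; [lra|]. intros; lia.
  - destruct IH as (e1 & He1 & H1). { intros n Hn; apply HK; lia. }
    destruct (HK K ltac:(lia)) as (e2 & He2 & H2).
    exists (Rmin e1 e2). split; [apply Rmin_pos; lra|].
    pose proof (Rmin_l e1 e2). pose proof (Rmin_r e1 e2). pose proof (Rmin_pos e1 e2 He1 He2).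
    intros n Hn. destruct (Nat.eq_dec n K) as [->|Hne].
    + apply (Hmono K e2); [exact H2|lra].
    + apply (Hmono n e1); [apply H1; lia|lra].
Qed.

Lemma iter_mod_period {A : Type} (f : A -> A) (P : nat) (d : A) :
  (P >= 1)%nat -> Nat.iter P f d = d -> forall k, Nat.iter k f d = Nat.iter (k mod P) f d.
Proof.
  intros HP Hd k.
  assert (Hmul : forall q, Nat.iter (q * P) f d = d).
  { induction q as [|q IH]; [reflexivity|].
    replace (S q * P)%nat with (P + q * P)%nat by lia. rewrite Nat.iter_add, IH. exact Hd. }
  replace (Nat.iter k f d) with (Nat.iter (k mod P + k / P * P) f d)
    by (f_equal; pose proof (Nat.div_mod_eq k P); lia).
  rewrite Nat.iter_add, Hmul. reflexivity.
Qed.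

Lemma finite_periodic_orbit_values {A B : Type} (f : A -> A) (g : A -> B) (ds : list A) :
  exists L, forall d, In d ds -> forall P, (P >= 1)%nat -> Nat.iter P f d = d ->
    forall k, In (g (Nat.iter k f d)) L.
Proof.
  induction ds as [|d0 ds (L & HL)].
  - exists nil. intros d [].
  - destruct (classic (exists P, (P >= 1)%nat /\ Nat.iter P f d0 = d0)) as [(P0 & HP0 & Hd0)|Hnone].
    + exists (map (fun k => g (Nat.iter k f d0)) (seq 0 P0) ++ L).
      intros d [<-|Hd] P HP HPd k; apply in_or_app; [left|right; eapply HL; eauto].
      rewrite (iter_mod_period f P0 d0 HP0 Hd0 k).
      apply (in_map (fun k => g (Nat.iter k f d0))), in_seq.
      pose proof (Nat.mod_upper_bound k P0 ltac:(lia)). lia.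
    + exists L. intros d [<-|Hd] P HP HPd k.
      * exfalso; apply Hnone; eauto.
      * eapply HL; eauto.
Qed.

Lemma ex_series_binary (f : nat -> R) :
  (forall n, f n = 0 \/ f n = 1) -> ex_series (fun n => f n / 2 ^ S n).
Proof.
  intros Hf. apply (ex_series_le (V := R_CompleteNormedModule) _ (fun n => (/ 2) ^ n)).
  - intros n. change (norm (f n / 2 ^ S n)) with (Rabs (f n / 2 ^ S n)).
    assert (Hw : (/ 2) ^ n = 2 / 2 ^ S n).
    { rewrite pow_inv. simpl. field. apply pow_nonzero. lra. }
    assert (0 < / 2 ^ S n) by (apply Rinv_0_lt_compat, pow_lt; lra).
    rewrite Hw. unfold Rdiv in *.
    destruct (Hf n) as [-> | ->]; rewrite ?Rmult_0_l, ?Rmult_1_l, ?Rabs_R0, ?Rabs_right; lra.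
  - apply ex_series_geom. rewrite Rabs_right; lra.
Qed.

Lemma infinite_sum_ge (e : nat -> R) (L c : R) (n0 : nat) :
  infinite_sum e L -> (forall n, (n0 <= n)%nat -> c <= sum_f_R0 e n) -> c <= L.
Proof.
  intros HL Hn. destruct (Rle_lt_dec c L) as [|Hlt]; auto.
  destruct (HL (c - L) ltac:(lra)) as [N HN].
  specialize (HN (Nat.max N n0) ltac:(lia)). specialize (Hn (Nat.max N n0) ltac:(lia)).
  unfold Rdist in HN. apply Rabs_def2 in HN. lra.
Qed.
(* With [D n := sum_(k<=n) (f k - g k) / 2^(k+1) - 1/2^(n+1)] one has [D N = 0] and
   [D (n+1) = D n + (f (n+1) - g (n+1) + 1) / 2^(n+2)], with nonnegative increments. *)
Lemma binary_difference_partial_sums (f g : nat -> R) (N : nat) :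
  (forall n, f n = 0 \/ f n = 1) -> (forall n, g n = 0 \/ g n = 1) ->
  (forall k, (k < N)%nat -> f k = g k) -> g N = 0 -> f N = 1 ->
  forall n, (N <= n)%nat ->
    0 <= sum_f_R0 (fun k => (f k - g k) / 2 ^ S k) n /\
    forall k, (N < k <= n)%nat ->
      (f k - g k + 1) / 2 ^ S k <= sum_f_R0 (fun k => (f k - g k) / 2 ^ S k) n.
Proof.
  intros Hf Hg Hbefore HgN HfN.
  set (e n := (f n - g n) / 2 ^ S n).
  assert (Hw : forall n, 0 < / 2 ^ S n) by (intros; apply Rinv_0_lt_compat, pow_lt; lra).
  assert (Hhalf : forall n, / 2 ^ S n = 2 * / 2 ^ S (S n)).
  { intros n. simpl. field. apply pow_nonzero. lra. }
  set (D n := sum_f_R0 e n - / 2 ^ S n).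
  set (c k := (f k - g k + 1) / 2 ^ S k).
  assert (Hc : forall k, 0 <= c k).
  { intros k. unfold c, Rdiv. apply Rmult_le_pos; [|left; apply Hw].
    destruct (Hf k) as [-> | ->]; destruct (Hg k) as [-> | ->]; lra. }
  assert (HDstep : forall n, D (S n) = D n + c (S n)).
  { intros n. unfold D, c. simpl (sum_f_R0 e (S n)). rewrite (Hhalf n). unfold e, Rdiv. ring. }
  assert (HDN : D N = 0).
  { assert (Hzero : forall n, (n < N)%nat -> sum_f_R0 e n = 0).
    { induction n as [|n IH]; intros Hn; cbn [sum_f_R0]; [|rewrite IH by lia];
        unfold e; rewrite Hbefore by lia; unfold Rdiv; ring. }
    unfold D. destruct N as [|N']; cbn [sum_f_R0]; [|rewrite Hzero by lia];
      unfold e; rewrite HfN, HgN; field; apply pow_nonzero; lra. }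
  assert (HDmono : forall n j, D n <= D (n + j)%nat).
  { intros n j. induction j as [|j IH]; [rewrite Nat.add_0_r; lra|].
    rewrite <- plus_n_Sm, HDstep. pose proof (Hc (S (n + j))). lra. }
  intros n Hn. fold e. pose proof (Hw n).
  replace n with (N + (n - N))%nat in * by lia. pose proof (HDmono N (n - N)%nat).
  unfold D in *. split; [lra|].
  intros [|k'] Hk; [lia|].
  pose proof (HDmono N (k' - N)%nat). pose proof (HDmono (S k') (n - S k')%nat).
  replace (N + (k' - N))%nat with k' in * by lia.
  replace (S k' + (n - S k'))%nat with (N + (n - N))%nat in * by lia.
  rewrite HDstep in *. unfold D in *. fold (c (S k')). lra.
Qed.

Lemma binary_series_first_difference (f g : nat -> R) (N : nat) :
  (forall n, f n = 0 \/ f n = 1) -> (forall n, g n = 0 \/ g n = 1) ->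
  (forall k, (k < N)%nat -> f k = g k) -> g N = 0 -> f N = 1 ->
  Series (fun n => g n / 2 ^ S n) <= Series (fun n => f n / 2 ^ S n) /\
  (Series (fun n => g n / 2 ^ S n) = Series (fun n => f n / 2 ^ S n) ->
   forall k, (N < k)%nat -> f k = 0 /\ g k = 1).
Proof.
  intros Hf Hg Hbefore HgN HfN.
  pose proof (binary_difference_partial_sums f g N Hf Hg Hbefore HgN HfN) as Hpartial.
  set (e n := (f n - g n) / 2 ^ S n) in *.
  assert (Hdiff : Series (fun n => f n / 2 ^ S n) - Series (fun n => g n / 2 ^ S n) = Series e).
  { rewrite <- Series_minus by (apply ex_series_binary; auto).
    apply Series_ext. intros n. unfold e, Rdiv. ring. }
  assert (Hsum : infinite_sum e (Series e)).
  { apply is_series_Reals, Series_correct.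
    apply (ex_series_ext (fun n => f n / 2 ^ S n - g n / 2 ^ S n)).
    { intros n. change (f n / 2 ^ S n - g n / 2 ^ S n = e n). unfold e, Rdiv. ring. }
    apply (ex_series_minus (V := R_NormedModule)); apply ex_series_binary; auto. }
  split.
  - assert (0 <= Series e); [|lra].
    apply (infinite_sum_ge e _ _ N Hsum). intros n Hn. apply (Hpartial n Hn).
  - intros Heq k Hk.
    assert (Hck : (f k - g k + 1) / 2 ^ S k <= 0).
    { rewrite <- Heq in Hdiff. replace 0 with (Series e) by lra.
      apply (infinite_sum_ge e _ _ k Hsum). intros n Hn. apply (Hpartial n ltac:(lia)). lia. }
    assert (Hw : 0 < / 2 ^ S k) by (apply Rinv_0_lt_compat, pow_lt; lra).
    unfold Rdiv in Hck.
    destruct (Hf k) as [E1|E1]; destruct (Hg k) as [E2|E2]; rewrite E1, E2 in *; split; nra.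
Qed.

Section DeckShuffler.

Variables (m : nat) (a b : nat -> R).
Hypothesis hl : length_vector m a b.

Local Notation Tl := (T m a b).
Local Notation Tn n := (Nat.iter n (T m a b)).
Local Notation chi := (chiB m a b).

Lemma a_pos i : (i < m)%nat -> 0 < a i.
Proof. destruct hl as (_ & Ha & _); auto. Qed.

Lemma b_pos i : (i < m)%nat -> 0 < b i.
Proof. destruct hl as (_ & _ & Hb & _); auto. Qed.

Lemma lengths_sum_1 : rsum a m + rsum b m = 1.
Proof. destruct hl as (_ & _ & _ & Hs); auto. Qed.

Lemma rsum_a_le i j : (i <= j <= m)%nat -> rsum a i <= rsum a j.
Proof. apply (rsum_le_mono a m a_pos). Qed.

Lemma rsum_b_le i j : (i <= j <= m)%nat -> rsum b i <= rsum b j.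
Proof. apply (rsum_le_mono b m b_pos). Qed.

Lemma rsum_a_succ_le i j : (i < j <= m)%nat -> rsum a i + a i <= rsum a j.
Proof. intros Hij. apply (rsum_a_le (S i) j). lia. Qed.

Lemma rsum_b_succ_le i j : (i < j <= m)%nat -> rsum b i + b i <= rsum b j.
Proof. intros Hij. apply (rsum_b_le (S i) j). lia. Qed.

Lemma inA_lt_alpha i x : (i < m)%nat -> inA a i x -> x < rsum a m.
Proof.
  intros Hi [_ Hx]. unfold leftA in Hx. pose proof (rsum_a_succ_le i m ltac:(lia)). lra.
Qed.

Lemma inB_ge_alpha i x : (i < m)%nat -> inB m a b i x -> rsum a m <= x.
Proof.
  intros Hi [Hx _]. unfold leftB in Hx. pose proof (rsum_b_le 0 i ltac:(lia)). simpl in *. lra.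
Qed.

Lemma inA_unique i j x : (i < m)%nat -> (j < m)%nat -> inA a i x -> inA a j x -> i = j.
Proof.
  intros Hi Hj [Hi1 Hi2] [Hj1 Hj2]. unfold leftA in *.
  destruct (Nat.lt_trichotomy i j) as [Hlt|[Heq|Hlt]]; auto; exfalso.
  - pose proof (rsum_a_succ_le i j ltac:(lia)). lra.
  - pose proof (rsum_a_succ_le j i ltac:(lia)). lra.
Qed.

Lemma inB_unique i j x : (i < m)%nat -> (j < m)%nat -> inB m a b i x -> inB m a b j x -> i = j.
Proof.
  intros Hi Hj [Hi1 Hi2] [Hj1 Hj2]. unfold leftB in *.
  destruct (Nat.lt_trichotomy i j) as [Hlt|[Heq|Hlt]]; auto; exfalso.
  - pose proof (rsum_b_succ_le i j ltac:(lia)). lra.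
  - pose proof (rsum_b_succ_le j i ltac:(lia)). lra.
Qed.

Lemma T_on_A i x : (i < m)%nat -> inA a i x -> Tl x = x + rsum b (S i).
Proof.
  intros Hi HA. unfold T.
  rewrite (rsum_indicator_single (fun j => inA a j x) (fun j => rsum b (S j)) m i Hi).
  2:{ intros j Hj. split; [intros; eapply inA_unique; eauto | intros ->; auto]. }
  rewrite rsum_indicator_zero; [lra|].
  intros j Hj HB. pose proof (inA_lt_alpha i x Hi HA). pose proof (inB_ge_alpha j x Hj HB). lra.
Qed.

Lemma T_on_B i x : (i < m)%nat -> inB m a b i x -> Tl x = x - (rsum a m - rsum a i).
Proof.
  intros Hi HB. unfold T.
  rewrite (rsum_indicator_single (fun j => inB m a b j x) (fun j => rsum a m - rsum a j) m i Hi).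
  2:{ intros j Hj. split; [intros; eapply inB_unique; eauto | intros ->; auto]. }
  rewrite rsum_indicator_zero; [lra|].
  intros j Hj HA. pose proof (inA_lt_alpha j x Hj HA). pose proof (inB_ge_alpha i x Hi HB). lra.
Qed.

Lemma piece_cases x : 0 <= x < 1 ->
  (exists i, (i < m)%nat /\ inA a i x) \/ (exists i, (i < m)%nat /\ inB m a b i x).
Proof.
  intros Hx. pose proof lengths_sum_1.
  destruct (Rlt_le_dec x (rsum a m)) as [HA|HB].
  - left. destruct (rsum_locate a 0 x m ltac:(lra)) as (i & Hi & Hxi).
    exists i. split; auto. unfold inA, leftA. lra.
  - right. destruct (rsum_locate b (rsum a m) x m ltac:(lra)) as (i & Hi & Hxi).
    exists i. split; auto.
Qed.

Lemma T_on_A_range i x : (i < m)%nat -> inA a i x ->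
  rsum a i + rsum b (S i) <= Tl x < rsum a (S i) + rsum b (S i).
Proof.
  intros Hi HA. rewrite (T_on_A i x Hi HA). destruct HA as [H1 H2]. unfold leftA in *. simpl. lra.
Qed.

Lemma T_on_B_range i x : (i < m)%nat -> inB m a b i x ->
  rsum a i + rsum b i <= Tl x < rsum a i + rsum b (S i).
Proof.
  intros Hi HB. rewrite (T_on_B i x Hi HB). destruct HB as [H1 H2]. unfold leftB in *. simpl. lra.
Qed.

Lemma T_maps_unit_interval x : 0 <= x < 1 -> 0 <= Tl x < 1.
Proof.
  intros Hx. pose proof lengths_sum_1.
  destruct (piece_cases x Hx) as [(i & Hi & HA)|(i & Hi & HB)].
  - pose proof (T_on_A_range i x Hi HA).
    pose proof (rsum_a_le 0 i ltac:(lia)). pose proof (rsum_b_le 0 (S i) ltac:(lia)).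
    pose proof (rsum_a_le (S i) m ltac:(lia)). pose proof (rsum_b_le (S i) m ltac:(lia)).
    simpl in *. lra.
  - pose proof (T_on_B_range i x Hi HB).
    pose proof (rsum_a_le 0 i ltac:(lia)). pose proof (rsum_b_le 0 i ltac:(lia)).
    pose proof (rsum_a_le i m ltac:(lia)). pose proof (rsum_b_le (S i) m ltac:(lia)).
    simpl in *. lra.
Qed.

Lemma chi_on_A x : x < rsum a m -> chi x = 0.
Proof.
  intros Hx. apply ind_false. intros (i & Hi & HB). pose proof (inB_ge_alpha i x Hi HB). lra.
Qed.

Lemma chi_on_B x : rsum a m <= x < 1 -> chi x = 1.
Proof.
  intros Hx. apply ind_true. pose proof lengths_sum_1.
  destruct (rsum_locate b (rsum a m) x m ltac:(lra)) as (i & Hi & Hxi). exists i. split; auto.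
Qed.

Lemma chi_0_or_1 x : chi x = 0 \/ chi x = 1.
Proof. apply ind_0_or_1. Qed.

Lemma chi_le x y : 0 <= x -> x <= y -> y < 1 -> chi x <= chi y.
Proof.
  intros Hx Hxy Hy. destruct (Rlt_le_dec x (rsum a m)) as [HA|HB].
  - rewrite (chi_on_A x HA). destruct (chi_0_or_1 y) as [-> | ->]; lra.
  - rewrite !chi_on_B; lra.
Qed.

Lemma displacement_sign x : 0 <= x < 1 ->
  (x < rsum a m -> x < Tl x) /\ (rsum a m <= x -> Tl x < x).
Proof.
  intros Hx. destruct (piece_cases x Hx) as [(i & Hi & HA)|(i & Hi & HB)].
  - pose proof (inA_lt_alpha i x Hi HA). rewrite (T_on_A i x Hi HA).
    pose proof (rsum_b_succ_le 0 (S i) ltac:(lia)). pose proof (b_pos 0 ltac:(lia)).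
    simpl in *. split; intros; lra.
  - pose proof (inB_ge_alpha i x Hi HB). rewrite (T_on_B i x Hi HB).
    pose proof (rsum_a_succ_le i m ltac:(lia)). pose proof (a_pos i Hi). split; intros; lra.
Qed.

Lemma chi_eq_of_same_displacement s t : 0 <= s < 1 -> 0 <= t < 1 ->
  Tl s - s = Tl t - t -> chi s = chi t.
Proof.
  intros Hs Ht Heq.
  destruct (displacement_sign s Hs) as [HsA HsB], (displacement_sign t Ht) as [HtA HtB].
  destruct (Rlt_le_dec s (rsum a m)) as [Hs'|Hs'], (Rlt_le_dec t (rsum a m)) as [Ht'|Ht'].
  - rewrite !chi_on_A by lra. reflexivity.
  - specialize (HsA Hs'). specialize (HtB Ht'). lra.
  - specialize (HsB Hs'). specialize (HtA Ht'). lra.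
  - rewrite !chi_on_B by lra. reflexivity.
Qed.

Lemma T_expanding x y : 0 <= x -> x <= y -> y < 1 -> chi x = chi y -> y - x <= Tl y - Tl x.
Proof.
  intros Hx Hxy Hy Hc.
  destruct (piece_cases x ltac:(lra)) as [(i & Hi & HxA)|(i & Hi & HxB)];
  destruct (piece_cases y ltac:(lra)) as [(j & Hj & HyA)|(j & Hj & HyB)].
  - rewrite (T_on_A i x Hi HxA), (T_on_A j y Hj HyA).
    destruct (Nat.lt_ge_cases j i).
    + exfalso. destruct HxA as [Hx1 _], HyA as [_ Hy2]. unfold leftA in *.
      pose proof (rsum_a_succ_le j i ltac:(lia)). lra.
    + pose proof (rsum_b_le (S i) (S j) ltac:(lia)). lra.
  - exfalso. pose proof (inB_ge_alpha j y Hj HyB).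
    rewrite (chi_on_A x (inA_lt_alpha i x Hi HxA)), (chi_on_B y) in Hc; lra.
  - exfalso. pose proof (inB_ge_alpha i x Hi HxB). pose proof (inA_lt_alpha j y Hj HyA). lra.
  - rewrite (T_on_B i x Hi HxB), (T_on_B j y Hj HyB).
    destruct (Nat.lt_ge_cases j i).
    + exfalso. destruct HxB as [Hx1 _], HyB as [_ Hy2]. unfold leftB in *.
      pose proof (rsum_b_succ_le j i ltac:(lia)). lra.
    + pose proof (rsum_a_le i j ltac:(lia)). lra.
Qed.

(* Equal [chi]: [T_expanding]; otherwise [x] in [A_i], [y] in [B_j], and [T] sends
   [B_0, A_0, B_1, A_1, ...] to consecutive disjoint intervals. *)
Lemma T_injective_le x y : 0 <= x -> x <= y -> y < 1 -> Tl x = Tl y -> x = y.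
Proof.
  intros Hx Hxy Hy Heq.
  destruct (Req_dec (chi x) (chi y)) as [Hc|Hc].
  { pose proof (T_expanding x y Hx Hxy Hy Hc). lra. }
  exfalso.
  destruct (piece_cases x ltac:(lra)) as [(i & Hi & HxA)|(i & Hi & HxB)].
  2:{ apply Hc. pose proof (inB_ge_alpha i x Hi HxB). rewrite !chi_on_B; auto; lra. }
  destruct (piece_cases y ltac:(lra)) as [(j & Hj & HyA)|(j & Hj & HyB)].
  { apply Hc. rewrite !chi_on_A; eauto using inA_lt_alpha. }
  pose proof (T_on_A_range i x Hi HxA). pose proof (T_on_B_range j y Hj HyB).
  destruct (Nat.lt_ge_cases i j).
  - pose proof (rsum_a_le (S i) j ltac:(lia)). pose proof (rsum_b_le (S i) j ltac:(lia)). lra.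
  - pose proof (rsum_a_le j i ltac:(lia)). pose proof (rsum_b_le (S j) (S i) ltac:(lia)). lra.
Qed.

Lemma T_injective x y : 0 <= x < 1 -> 0 <= y < 1 -> Tl x = Tl y -> x = y.
Proof.
  intros Hx Hy Heq. destruct (Rle_lt_dec x y).
  - apply T_injective_le; auto; lra.
  - symmetry. apply T_injective_le; auto; lra.
Qed.

Lemma displacement_right_const t : 0 <= t < 1 ->
  exists eps, 0 < eps /\ forall s, t <= s < t + eps -> 0 <= s < 1 /\ Tl s - s = Tl t - t.
Proof.
  intros Ht. pose proof lengths_sum_1.
  destruct (piece_cases t Ht) as [(i & Hi & [Ht1 Ht2])|(i & Hi & [Ht1 Ht2])].
  - exists (leftA a i + a i - t). split; [lra|]. intros s Hs.
    assert (HsA : inA a i s) by (split; lra).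
    pose proof (inA_lt_alpha i s Hi HsA). pose proof (rsum_b_le 0 m ltac:(lia)). simpl in *.
    split; [lra|]. rewrite (T_on_A i s Hi HsA), (T_on_A i t Hi (conj Ht1 Ht2)). lra.
  - exists (leftB m a b i + b i - t). split; [lra|]. intros s Hs.
    assert (HsB : inB m a b i s) by (split; lra).
    pose proof (inB_ge_alpha i s Hi HsB). pose proof (rsum_b_succ_le i m ltac:(lia)).
    unfold leftB in *. split; [lra|].
    rewrite (T_on_B i s Hi HsB), (T_on_B i t Hi (conj Ht1 Ht2)). lra.
Qed.

Definition breakpoints : list R := map (leftA a) (seq 0 m) ++ map (leftB m a b) (seq 0 m).

Lemma displacement_left_const t : 0 <= t < 1 -> ~ In t breakpoints ->
  exists eps, 0 < eps /\ forall s, t - eps < s <= t -> 0 <= s < 1 /\ Tl s - s = Tl t - t.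
Proof.
  intros Ht Hnb.
  destruct (piece_cases t Ht) as [(i & Hi & [Ht1 Ht2])|(i & Hi & [Ht1 Ht2])].
  - assert (Hne : t <> leftA a i).
    { intros ->. apply Hnb, in_or_app. left. apply in_map, in_seq. lia. }
    exists (t - leftA a i). split; [lra|]. intros s Hs.
    assert (HsA : inA a i s) by (split; lra).
    pose proof (rsum_a_le 0 i ltac:(lia)). unfold leftA in *. simpl in *.
    split; [lra|]. rewrite (T_on_A i s Hi HsA), (T_on_A i t Hi (conj Ht1 Ht2)). lra.
  - assert (Hne : t <> leftB m a b i).
    { intros ->. apply Hnb, in_or_app. right. apply in_map, in_seq. lia. }
    exists (t - leftB m a b i). split; [lra|]. intros s Hs.
    assert (HsB : inB m a b i s) by (split; lra).
    pose proof (inB_ge_alpha i s Hi HsB). pose proof (rsum_a_le 0 m ltac:(lia)). simpl in *.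
    split; [lra|]. rewrite (T_on_B i s Hi HsB), (T_on_B i t Hi (conj Ht1 Ht2)). lra.
Qed.

Lemma iter_maps_unit_interval n x : 0 <= x < 1 -> 0 <= Tn n x < 1.
Proof.
  intros Hx. induction n as [|n IH]; [exact Hx|].
  rewrite Nat.iter_succ. apply T_maps_unit_interval, IH.
Qed.

Definition same_itinerary x y := forall n, chi (Tn n x) = chi (Tn n y).

Lemma same_itinerary_refl x : same_itinerary x x.
Proof. intros n; reflexivity. Qed.

Lemma same_itinerary_sym x y : same_itinerary x y -> same_itinerary y x.
Proof. intros Hxy n; symmetry; apply Hxy. Qed.

Lemma same_itinerary_trans x y z :
  same_itinerary x y -> same_itinerary y z -> same_itinerary x z.
Proof. intros Hxy Hyz n; rewrite Hxy; apply Hyz. Qed.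

Lemma same_itinerary_iter k x y : same_itinerary x y -> same_itinerary (Tn k x) (Tn k y).
Proof. intros Hxy n. rewrite <- !Nat.iter_add. apply Hxy. Qed.

Lemma iter_expanding x y n : 0 <= x -> x <= y -> y < 1 ->
  (forall k, (k < n)%nat -> chi (Tn k x) = chi (Tn k y)) -> y - x <= Tn n y - Tn n x.
Proof.
  intros Hx Hxy Hy. induction n as [|n IH]; intros Hc; [simpl; lra|].
  specialize (IH (fun k Hk => Hc k ltac:(lia))).
  pose proof (iter_maps_unit_interval n x ltac:(lra)).
  pose proof (iter_maps_unit_interval n y ltac:(lra)).
  pose proof (T_expanding (Tn n x) (Tn n y) ltac:(lra) ltac:(lra) ltac:(lra) (Hc n ltac:(lia))).
  rewrite !Nat.iter_succ. lra.
Qed.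

Lemma same_itinerary_expanding x y n : 0 <= x -> x <= y -> y < 1 -> same_itinerary x y ->
  Tn n x + (y - x) <= Tn n y.
Proof.
  intros Hx Hxy Hy Hsame. pose proof (iter_expanding x y n Hx Hxy Hy (fun k _ => Hsame k)). lra.
Qed.

(* Order and [chi] are preserved together along the orbits of [s <= t <= u]. *)
Lemma same_itinerary_convex s t u : 0 <= s -> s <= t <= u -> u < 1 ->
  same_itinerary s u -> same_itinerary s t.
Proof.
  intros Hs Ht Hu Hsu.
  assert (Hunit : forall n x, 0 <= x -> x < 1 -> 0 <= Tn n x < 1)
    by (intros; apply iter_maps_unit_interval; lra).
  assert (Hchi : forall n, Tn n s <= Tn n t <= Tn n u ->
    chi (Tn n s) = chi (Tn n t) /\ chi (Tn n t) = chi (Tn n u)).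
  { intros n Hn. pose proof (Hunit n s ltac:(lra) ltac:(lra)) as Hs'.
    pose proof (Hunit n t ltac:(lra) ltac:(lra)) as Ht'.
    pose proof (Hunit n u ltac:(lra) ltac:(lra)).
    pose proof (chi_le (Tn n s) (Tn n t) ltac:(lra) ltac:(lra) ltac:(lra)).
    pose proof (chi_le (Tn n t) (Tn n u) ltac:(lra) ltac:(lra) ltac:(lra)).
    specialize (Hsu n). destruct (chi_0_or_1 (Tn n s)), (chi_0_or_1 (Tn n t)); lra. }
  assert (Horder : forall n, Tn n s <= Tn n t <= Tn n u).
  { induction n as [|n IH]; [simpl; lra|]. destruct (Hchi n IH) as [Hst Htu].
    pose proof (Hunit n s ltac:(lra) ltac:(lra)). pose proof (Hunit n u ltac:(lra) ltac:(lra)).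
    pose proof (T_expanding (Tn n s) (Tn n t) ltac:(lra) (proj1 IH) ltac:(lra) Hst).
    pose proof (T_expanding (Tn n t) (Tn n u) ltac:(lra) (proj2 IH) ltac:(lra) Htu).
    rewrite !Nat.iter_succ. lra. }
  intros n. apply (Hchi n (Horder n)).
Qed.

Lemma first_difference s t : 0 <= s -> s <= t -> t < 1 ->
  same_itinerary s t \/ exists N, (forall k, (k < N)%nat -> chi (Tn k s) = chi (Tn k t)) /\
    chi (Tn N s) = 0 /\ chi (Tn N t) = 1.
Proof.
  intros Hs Hst Ht.
  destruct (classic (same_itinerary s t)) as [Hsame|Hdiff]; [left; exact Hsame|right].
  apply not_all_ex_not in Hdiff.
  destruct (dec_inh_nat_subset_has_unique_least_element _ (fun n => classic _) Hdiff)
    as (N & [HN Hleast] & _).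
  assert (Hbefore : forall k, (k < N)%nat -> chi (Tn k s) = chi (Tn k t)).
  { intros k Hk. apply NNPP. intros Hne. specialize (Hleast k Hne). lia. }
  exists N. split; [exact Hbefore|].
  pose proof (iter_expanding s t N Hs Hst Ht Hbefore).
  pose proof (iter_maps_unit_interval N s ltac:(lra)).
  pose proof (iter_maps_unit_interval N t ltac:(lra)).
  pose proof (chi_le (Tn N s) (Tn N t) ltac:(lra) ltac:(lra) ltac:(lra)).
  destruct (chi_0_or_1 (Tn N s)) as [E1|E1], (chi_0_or_1 (Tn N t)) as [E2|E2];
    rewrite E1, E2 in *; [congruence | auto | lra | congruence].
Qed.

Lemma H_same_itinerary x y : same_itinerary x y -> H m a b x = H m a b y.
Proof. intros Hsame. apply Series_ext. intros n. rewrite Hsame. reflexivity. Qed.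

Lemma H_monotone x y : 0 <= x -> x <= y -> y < 1 -> H m a b x <= H m a b y.
Proof.
  intros Hx Hxy Hy.
  destruct (first_difference x y Hx Hxy Hy) as [Hsame|(N & Hbefore & Hx0 & Hy1)].
  - rewrite (H_same_itinerary x y Hsame). lra.
  - destruct (binary_series_first_difference (fun n => chi (Tn n y)) (fun n => chi (Tn n x)) N)
      as [Hle _]; auto using chi_0_or_1.
    intros k Hk. symmetry. auto.
Qed.

(* Two binary expansions of the same number: [0111...] and [1000...]. *)
Lemma H_eq_tail x y : 0 <= x -> x <= y -> y < 1 -> H m a b x = H m a b y ->
  ~ same_itinerary x y -> exists N, forall k, (N < k)%nat -> chi (Tn k x) = 1 /\ chi (Tn k y) = 0.
Proof.
  intros Hx Hxy Hy Heq Hdiff.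
  destruct (first_difference x y Hx Hxy Hy) as [Hsame|(N & Hbefore & Hx0 & Hy1)]; [tauto|].
  destruct (binary_series_first_difference (fun n => chi (Tn n y)) (fun n => chi (Tn n x)) N)
    as [_ Htail]; auto using chi_0_or_1.
  { intros k Hk. symmetry. auto. }
  exists N. intros k Hk. destruct (Htail Heq k Hk). split; auto.
Qed.

Lemma H_plateau_same_itinerary x t y : 0 <= x -> x <= t <= y -> y < 1 ->
  H m a b x = H m a b t -> H m a b t = H m a b y -> same_itinerary x t \/ same_itinerary t y.
Proof.
  intros Hx Ht Hy Hxt Hty.
  destruct (classic (same_itinerary x t)) as [|Hdiff1]; [left; auto|].
  destruct (classic (same_itinerary t y)) as [|Hdiff2]; [right; auto|].
  destruct (H_eq_tail x t Hx ltac:(lra) ltac:(lra) Hxt Hdiff1) as [N1 HN1].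
  destruct (H_eq_tail t y ltac:(lra) ltac:(lra) Hy Hty Hdiff2) as [N2 HN2].
  destruct (HN1 (S (N1 + N2)) ltac:(lia)) as [_ E1].
  destruct (HN2 (S (N1 + N2)) ltac:(lia)) as [E2 _]. lra.
Qed.

Lemma level_set_same_itinerary_pair z : pos_length_interval (level_set m a b z) ->
  exists u v, 0 <= u /\ u < v /\ v < 1 /\ same_itinerary u v /\ H m a b u = z.
Proof.
  intros [Hconv (x & y & [Hx Hxz] & [Hy Hyz] & Hxy)].
  set (t := (x + y) / 2).
  destruct (Hconv x y t) as [Ht Htz]; [split; auto | split; auto | unfold t; lra|].
  destruct (H_plateau_same_itinerary x t y ltac:(lra) ltac:(unfold t; lra) ltac:(lra)
    ltac:(congruence) ltac:(congruence)) as [Hsame|Hsame].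
  - exists x, t. unfold t in *. repeat split; auto; lra.
  - exists t, y. unfold t in *. repeat split; auto; lra.
Qed.

Lemma iter_displacement_right_const n t : 0 <= t < 1 ->
  exists eps, 0 < eps /\ forall s, t <= s < t + eps -> 0 <= s < 1 /\ Tn n s - s = Tn n t - t.
Proof.
  intros Ht. induction n as [|n (e1 & He1 & Hc1)].
  - exists (1 - t). split; [lra|]. intros s Hs. simpl. split; lra.
  - destruct (displacement_right_const (Tn n t) (iter_maps_unit_interval n t Ht))
      as (e2 & He2 & Hc2).
    exists (Rmin e1 e2). split; [apply Rmin_pos; lra|]. intros s Hs.
    pose proof (Rmin_l e1 e2). pose proof (Rmin_r e1 e2).
    destruct (Hc1 s ltac:(lra)) as [Hs01 Es]. split; [exact Hs01|].
    destruct (Hc2 (Tn n s) ltac:(lra)) as [_ E2]. rewrite !Nat.iter_succ. lra.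
Qed.

Lemma chi_iter_right_const n t : 0 <= t < 1 ->
  exists eps, 0 < eps /\ forall s, t <= s < t + eps -> chi (Tn n s) = chi (Tn n t).
Proof.
  intros Ht.
  destruct (iter_displacement_right_const n t Ht) as (e1 & He1 & Hc1).
  destruct (iter_displacement_right_const (S n) t Ht) as (e2 & He2 & Hc2).
  exists (Rmin e1 e2). split; [apply Rmin_pos; lra|]. intros s Hs.
  pose proof (Rmin_l e1 e2). pose proof (Rmin_r e1 e2).
  destruct (Hc1 s ltac:(lra)) as [Hs01 E1]. destruct (Hc2 s ltac:(lra)) as [_ E2].
  rewrite !Nat.iter_succ in E2.
  apply chi_eq_of_same_displacement; try apply iter_maps_unit_interval; auto. lra.
Qed.

Definition cyl t s := 0 <= s < 1 /\ same_itinerary s t.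

Definition is_cyl_min t q := cyl t q /\ forall s, cyl t s -> q <= s.

Definition cyl_min t := epsilon (inhabits 0) (is_cyl_min t).
Definition cyl_sup t := epsilon (inhabits 0) (is_lub (cyl t)).
Definition cyl_length t := cyl_sup t - cyl_min t.

(* The infimum [q] lies in the cylinder: each [chi (Tn n q)] agrees with that of points of the
   cylinder just to the right of [q]. *)
Lemma cyl_min_exists t : 0 <= t < 1 -> exists q, is_cyl_min t q.
Proof.
  intros Ht.
  destruct (completeness (fun r => cyl t (- r))) as [M [Hub Hleast]].
  { exists 0. intros r [Hr _]. lra. }
  { exists (- t). rewrite Ropp_involutive. split; [exact Ht|apply same_itinerary_refl]. }
  assert (Hlow : forall s, cyl t s -> - M <= s).
  { intros s Hs. assert (- s <= M) by (apply Hub; rewrite Ropp_involutive; exact Hs). lra. }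
  assert (HM : M <= 0) by (apply Hleast; intros r [Hr _]; lra).
  assert (Hq : 0 <= - M < 1).
  { pose proof (Hlow t (conj Ht (same_itinerary_refl t))). lra. }
  exists (- M). split; [split; [exact Hq|] | exact Hlow].
  intros n. destruct (chi_iter_right_const n (- M) Hq) as (e & He & Hc).
  destruct (classic (exists s, cyl t s /\ s < - M + e)) as [(s & Hs & Hlt)|Hnone].
  - rewrite <- (Hc s); [apply (proj2 Hs) | split; [apply Hlow; exact Hs | exact Hlt]].
  - exfalso. assert (M <= M - e); [|lra]. apply Hleast. intros r Hr.
    destruct (Rle_lt_dec r (M - e)) as [|Hlt]; auto.
    exfalso. apply Hnone. exists (- r). split; [exact Hr|lra].
Qed.

Lemma cyl_min_spec t : 0 <= t < 1 -> is_cyl_min t (cyl_min t).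
Proof. intros Ht. unfold cyl_min. apply epsilon_spec, cyl_min_exists, Ht. Qed.

Lemma cyl_sup_spec t : 0 <= t < 1 -> is_lub (cyl t) (cyl_sup t).
Proof.
  intros Ht. unfold cyl_sup. apply epsilon_spec.
  destruct (completeness (cyl t)) as [R HR]; [| |exists R; exact HR].
  - exists 1. intros s [Hs _]. lra.
  - exists t. split; [exact Ht|apply same_itinerary_refl].
Qed.

Lemma cyl_ext t t' : same_itinerary t t' -> cyl t = cyl t'.
Proof.
  intros Htt'. apply functional_extensionality. intros s.
  apply propositional_extensionality. unfold cyl. split; intros [Hs Hst]; split; auto.
  - apply same_itinerary_trans with t; auto.
  - apply same_itinerary_trans with t'; auto. apply same_itinerary_sym; auto.
Qed.

Lemma cyl_min_ext t t' : same_itinerary t t' -> cyl_min t = cyl_min t'.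
Proof. intros Htt'. unfold cyl_min, is_cyl_min. rewrite (cyl_ext t t' Htt'). reflexivity. Qed.

Lemma cyl_length_ext t t' : same_itinerary t t' -> cyl_length t = cyl_length t'.
Proof.
  intros Htt'. unfold cyl_length, cyl_sup. rewrite (cyl_min_ext t t' Htt'), (cyl_ext t t' Htt').
  reflexivity.
Qed.

Lemma cyl_T t s : cyl t s -> cyl (Tl t) (Tl s).
Proof.
  intros [Hs Hst]. split; [apply T_maps_unit_interval, Hs|].
  apply (same_itinerary_iter 1), Hst.
Qed.

Lemma cyl_interval t s : 0 <= t < 1 -> cyl_min t <= s < cyl_sup t -> cyl t s.
Proof.
  intros Ht Hs. destruct (cyl_min_spec t Ht) as [[Hq Hqt] _].
  destruct (cyl_sup_spec t Ht) as [_ Hleast].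
  destruct (classic (exists s', cyl t s' /\ s < s')) as [(s' & [Hs' Hs't] & Hlt)|Hnone].
  - split; [lra|]. apply same_itinerary_trans with (cyl_min t); [|exact Hqt].
    apply same_itinerary_sym, (same_itinerary_convex _ s s'); try lra.
    apply same_itinerary_trans with t; auto. apply same_itinerary_sym; auto.
  - exfalso. assert (cyl_sup t <= s); [|lra]. apply Hleast. intros s' Hs'.
    destruct (Rle_lt_dec s' s); auto. exfalso; eauto.
Qed.

(* On a cylinder [T] only moves points apart, so it cannot shrink cylinders. *)
Lemma cyl_length_le_T t : 0 <= t < 1 -> cyl_length t <= cyl_length (Tl t).
Proof.
  intros Ht. pose proof (T_maps_unit_interval t Ht) as HTt.
  destruct (cyl_min_spec t Ht) as [Hq Hqmin].
  destruct (cyl_sup_spec t Ht) as [_ Hleast].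
  destruct (cyl_min_spec (Tl t) HTt) as [_ Hq'min].
  destruct (cyl_sup_spec (Tl t) HTt) as [Hub' _].
  unfold cyl_length.
  assert (Hq' : cyl_min (Tl t) <= Tl (cyl_min t)) by (apply Hq'min, cyl_T, Hq).
  assert (Hbound : cyl_sup t <= cyl_min t + (cyl_sup (Tl t) - cyl_min (Tl t))); [|lra].
  apply Hleast. intros s Hs. pose proof (Hqmin s Hs). pose proof (Hub' _ (cyl_T t s Hs)).
  destruct Hq as [Hq01 Hqt], Hs as [Hs01 Hst].
  pose proof (T_expanding (cyl_min t) s ltac:(lra) ltac:(lra) ltac:(lra)
    (eq_trans (Hqt 0%nat) (eq_sym (Hst 0%nat)))).
  lra.
Qed.

Lemma cyl_length_iter_mono t k j : 0 <= t < 1 -> (k <= j)%nat ->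
  cyl_length (Tn k t) <= cyl_length (Tn j t).
Proof.
  intros Ht Hkj. induction Hkj as [|j Hkj IH]; [lra|].
  rewrite Nat.iter_succ.
  pose proof (cyl_length_le_T (Tn j t) (iter_maps_unit_interval j t Ht)). lra.
Qed.

(* If [T] does not enlarge the cylinder of [t], it translates it onto the bottom of the
   cylinder of [T t]: any extra expansion would leave room to spare below [cyl_sup t]. *)
Lemma cyl_translation t : 0 <= t < 1 -> cyl_length (Tl t) <= cyl_length t ->
  Tl (cyl_min t) = cyl_min (Tl t) /\
  forall s, cyl t s -> Tl s - s = Tl (cyl_min t) - cyl_min t.
Proof.
  intros Ht Hlen. pose proof (T_maps_unit_interval t Ht) as HTt.
  destruct (cyl_min_spec t Ht) as [Hq Hqmin].
  destruct (cyl_sup_spec t Ht) as [_ Hleast].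
  destruct (cyl_min_spec (Tl t) HTt) as [_ Hq'min].
  destruct (cyl_sup_spec (Tl t) HTt) as [Hub' _].
  unfold cyl_length in Hlen.
  set (q := cyl_min t) in *. set (q' := cyl_min (Tl t)) in *.
  set (R := cyl_sup t) in *. set (R' := cyl_sup (Tl t)) in *.
  assert (Hq' : q' <= Tl q) by (apply Hq'min, cyl_T, Hq).
  assert (Hexp : forall s s', cyl t s -> cyl t s' -> s <= s' -> s' - s <= Tl s' - Tl s).
  { intros s s' [Hs Hst] [Hs' Hs't] Hss'. apply T_expanding; try lra.
    exact (eq_trans (Hst 0%nat) (eq_sym (Hs't 0%nat))). }
  assert (HTub : forall s, cyl t s -> Tl s <= R') by (intros s Hs; apply Hub', cyl_T, Hs).
  split.
  - destruct (Rle_lt_dec (Tl q) q') as [|Hlt]; [lra|]. exfalso.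
    assert (R <= R - (Tl q - q')); [|lra]. apply Hleast. intros s Hs.
    pose proof (Hqmin s Hs). pose proof (Hexp q s Hq Hs ltac:(lra)). pose proof (HTub s Hs). lra.
  - intros s Hs. pose proof (Hqmin s Hs). pose proof (Hexp q s Hq Hs ltac:(lra)).
    destruct (Rle_lt_dec (Tl s - s) (Tl q - q)) as [|Hlt]; [lra|]. exfalso.
    set (e := (Tl s - s) - (Tl q - q)).
    assert (R <= R - e); [|unfold e in *; lra]. apply Hleast. intros s' Hs'.
    pose proof (HTub s Hs). pose proof (HTub s' Hs').
    destruct (Rle_lt_dec s' s) as [|Hlt']; [unfold e; lra|].
    pose proof (Hexp s s' Hs Hs' ltac:(lra)). unfold e. lra.
Qed.

Lemma same_itinerary_pullback s t : 0 <= s < 1 -> 0 <= t < 1 ->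
  cyl_length (Tl t) <= cyl_length t -> (exists u, Tl s < u /\ cyl (Tl t) u) ->
  same_itinerary (Tl s) (Tl t) -> same_itinerary s t.
Proof.
  intros Hs Ht Hlen (u & Hu & Hcu) Hsame.
  pose proof (T_maps_unit_interval t Ht) as HTt. pose proof (T_maps_unit_interval s Hs) as HTs.
  destruct (cyl_translation t Ht Hlen) as [Hmin Hshift].
  destruct (cyl_min_spec (Tl t) HTt) as [_ Hq'min].
  destruct (cyl_sup_spec (Tl t) HTt) as [Hub' _].
  pose proof (Hq'min (Tl s) (conj HTs Hsame)). pose proof (Hub' u Hcu).
  unfold cyl_length in Hlen.
  set (r := Tl s - (Tl (cyl_min t) - cyl_min t)).
  assert (Hr : cyl t r) by (apply cyl_interval; [exact Ht | unfold r; lra]).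
  assert (HTr : Tl r = Tl s) by (pose proof (Hshift r Hr); unfold r in *; lra).
  rewrite (T_injective s r Hs (proj1 Hr) (eq_sym HTr)). exact (proj2 Hr).
Qed.

Lemma cyl_min_along_orbit t n : 0 <= t < 1 -> cyl_min t = t ->
  (forall k, (k < n)%nat -> cyl_length (Tn (S k) t) <= cyl_length (Tn k t)) ->
  cyl_min (Tn n t) = Tn n t.
Proof.
  intros Ht Hmin. induction n as [|n IH]; intros Hlen; [exact Hmin|].
  rewrite Nat.iter_succ in *.
  destruct (cyl_translation (Tn n t) (iter_maps_unit_interval n t Ht) (Hlen n ltac:(lia)))
    as [Hshift _].
  rewrite <- Hshift, IH by (intros k Hk; apply Hlen; lia). reflexivity.
Qed.

(* Distinct cylinders met by the orbit of [t] are [y - t] apart, and [0,1) has room for only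
   finitely many such points. *)
Lemma orbit_recurrence t y : 0 <= t -> t < y -> y < 1 -> same_itinerary t y ->
  exists i P, (P >= 1)%nat /\ same_itinerary (Tn i t) (Tn (i + P) t).
Proof.
  intros Ht Hty Hy Hsame.
  assert (Hunit : forall n x, 0 <= x < 1 -> 0 <= Tn n x < 1)
    by (intros; apply iter_maps_unit_interval; auto).
  assert (Hgap : forall n, Tn n t + (y - t) <= Tn n y)
    by (intros n; apply same_itinerary_expanding; auto; lra).
  assert (Hsep : forall i j, Tn i t <= Tn j t -> ~ same_itinerary (Tn i t) (Tn j t) ->
    Tn i t + (y - t) <= Tn j t).
  { intros i j Hle Hdiff. destruct (Rle_lt_dec (Tn j t) (Tn i y)) as [Hin|Hout].
    - exfalso. apply Hdiff. pose proof (Hunit i t ltac:(lra)). pose proof (Hunit i y ltac:(lra)).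
      apply (same_itinerary_convex (Tn i t) (Tn j t) (Tn i y)); try lra.
      apply same_itinerary_iter, Hsame.
    - pose proof (Hgap i). lra. }
  apply NNPP. intros Hnone.
  destruct (unit_interval_seq_close_pair (y - t) (fun n => Tn n t) ltac:(lra)
    (fun n => Hunit n t ltac:(lra))) as (i & j & Hij & Hclose).
  assert (Hdiff : ~ same_itinerary (Tn i t) (Tn j t)).
  { intros Hs. apply Hnone. exists i, (j - i)%nat. split; [lia|].
    replace (i + (j - i))%nat with j by lia. exact Hs. }
  destruct (Rle_lt_dec (Tn i t) (Tn j t)) as [Hle|Hlt].
  - pose proof (Hsep i j Hle Hdiff). rewrite Rabs_left1 in Hclose; lra.
  - pose proof (Hsep j i ltac:(lra) (fun Hs => Hdiff (same_itinerary_sym _ _ Hs))).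
    rewrite Rabs_right in Hclose; lra.
Qed.

Lemma recurrence_descends t y i P : 0 <= t -> t < y -> y < 1 -> same_itinerary t y ->
  (P >= 1)%nat -> same_itinerary (Tn i t) (Tn (i + P) t) -> same_itinerary t (Tn P t).
Proof.
  intros Ht Hty Hy Hsame HP. induction i as [|i IH]; intros Hrec; [exact Hrec|].
  apply IH.
  assert (Hunit : forall n x, 0 <= x < 1 -> 0 <= Tn n x < 1)
    by (intros; apply iter_maps_unit_interval; auto).
  apply same_itinerary_pullback; [apply Hunit; lra | apply Hunit; lra | | | exact Hrec].
  - change (Tl (Tn (i + P) t)) with (Tn (S i + P) t). rewrite <- (cyl_length_ext _ _ Hrec).
    apply cyl_length_iter_mono; [lra | lia].
  - exists (Tn (S i) y). split.
    + pose proof (same_itinerary_expanding t y (S i) Ht ltac:(lra) Hy Hsame). simpl in *. lra.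
    + split; [apply Hunit; lra|]. apply same_itinerary_trans with (Tn (S i) t); [|exact Hrec].
      apply same_itinerary_sym, same_itinerary_iter, Hsame.
Qed.

(* If no orbit point were a breakpoint, [T] would be a translation just left of each of them,
   so a point slightly left of [p] would share the itinerary of [p], against minimality. *)
Lemma periodic_cyl_min_hits_breakpoint p P : 0 <= p < 1 -> (P >= 1)%nat -> Tn P p = p ->
  (forall s, cyl p s -> p <= s) -> exists n, (n < P)%nat /\ In (Tn n p) breakpoints.
Proof.
  intros Hp HP Hper Hmin. apply NNPP. intros Hnone.
  assert (Hunit : forall n, 0 <= Tn n p < 1) by (intros; apply iter_maps_unit_interval, Hp).
  destruct (uniform_eps_finite P (fun n e => forall s, Tn n p - e < s <= Tn n p ->
    0 <= s < 1 /\ Tl s - s = Tl (Tn n p) - Tn n p)) as (e & He & Hconst).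
  { intros n e e' Hq He' s Hs. apply Hq. lra. }
  { intros n Hn. apply displacement_left_const; [apply Hunit|]. intros Hb. apply Hnone. eauto. }
  set (s := p - e / 2).
  assert (Hshadow : forall k, (k <= P)%nat -> Tn k s = s + (Tn k p - p)).
  { induction k as [|k IH]; intros Hk; [simpl; lra|].
    rewrite !Nat.iter_succ, IH by lia.
    destruct (Hconst k ltac:(lia) (s + (Tn k p - p))) as [_ E]; [unfold s; lra|]. lra. }
  assert (Hs_per : Tn P s = s) by (rewrite Hshadow, Hper by lia; lra).
  assert (Hchi : forall k, (k < P)%nat -> chi (Tn k s) = chi (Tn k p)).
  { intros k Hk. rewrite Hshadow by lia.
    destruct (Hconst k Hk (s + (Tn k p - p))) as [Hs01 E]; [unfold s; lra|].
    apply chi_eq_of_same_displacement; auto. }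
  assert (Hs : cyl p s).
  { destruct (Hconst 0%nat ltac:(lia) s) as [Hs01 _]; [simpl; unfold s; lra|].
    split; [exact Hs01|]. intros k.
    rewrite (iter_mod_period _ P s HP Hs_per k), (iter_mod_period _ P p HP Hper k).
    apply Hchi, Nat.mod_upper_bound. lia. }
  pose proof (Hmin s Hs). unfold s in *. lra.
Qed.

(* Start from the bottom [p] of the cylinder of [x]: it recurs to its own cylinder, hence
   (the cylinder lengths being nondecreasing along the orbit) it is periodic, and its cycle
   contains a breakpoint. *)
Lemma same_itinerary_pair_periodic_breakpoint x y : 0 <= x -> x < y -> y < 1 ->
  same_itinerary x y ->
  exists d P k, In d breakpoints /\ (P >= 1)%nat /\ Tn P d = d /\ H m a b x = H m a b (Tn k d).
Proof.
  intros Hx Hxy Hy Hsame.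
  destruct (cyl_min_spec x ltac:(lra)) as [[Hp Hpx] Hpmin].
  set (p := cyl_min x) in *.
  assert (Hpy : same_itinerary p y) by (apply same_itinerary_trans with x; auto).
  assert (Hplex : p <= x) by (apply Hpmin; split; [lra|apply same_itinerary_refl]).
  destruct (orbit_recurrence p y ltac:(lra) ltac:(lra) Hy Hpy) as (i & P & HP & Hrec).
  pose proof (recurrence_descends p y i P ltac:(lra) ltac:(lra) Hy Hpy HP Hrec) as Hcycle.
  assert (Hmin_p : cyl_min p = p) by (unfold p at 2; apply cyl_min_ext, Hpx).
  assert (Hlen : forall k, (k < P)%nat -> cyl_length (Tn (S k) p) <= cyl_length (Tn k p)).
  { intros k Hk.
    pose proof (cyl_length_iter_mono p (S k) P Hp ltac:(lia)).
    pose proof (cyl_length_iter_mono p 0 k Hp ltac:(lia)).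
    rewrite <- (cyl_length_ext _ _ Hcycle) in *. simpl in *. lra. }
  assert (Hper : Tn P p = p).
  { transitivity (cyl_min (Tn P p)); [symmetry; apply cyl_min_along_orbit; auto|].
    rewrite <- (cyl_min_ext _ _ Hcycle). exact Hmin_p. }
  destruct (periodic_cyl_min_hits_breakpoint p P Hp HP Hper) as (n & Hn & Hbreak).
  { intros s Hs. apply Hpmin. rewrite <- (cyl_ext p x Hpx). exact Hs. }
  exists (Tn n p), P, (P - n)%nat. repeat split; auto.
  - rewrite <- Nat.iter_add, Nat.add_comm, Nat.iter_add, Hper. reflexivity.
  - rewrite <- Nat.iter_add, Nat.sub_add, Hper by lia.
    apply H_same_itinerary, same_itinerary_sym, Hpx.
Qed.

End DeckShuffler.

Theorem corollary4 (m : nat) (a b : nat -> R) (hl : length_vector m a b) :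
  (forall x y, 0 <= x -> x <= y -> y < 1 -> H m a b x <= H m a b y) /\
  (exists L : list R, forall z, 0 <= z < 1 ->
     pos_length_interval (level_set m a b z) -> In z L).
Proof.
  split.
  - exact (H_monotone m a b hl).
  - destruct (finite_periodic_orbit_values (T m a b) (H m a b) (breakpoints m a b)) as [L HL].
    exists L. intros z _ Hplateau.
    destruct (level_set_same_itinerary_pair m a b hl z Hplateau)
      as (u & v & Hu & Huv & Hv & Hsame & Hz).
    destruct (same_itinerary_pair_periodic_breakpoint m a b hl u v Hu Huv Hv Hsame)
      as (d & P & k & Hd & HP & Hper & Hk).
    rewrite <- Hz, Hk. exact (HL d Hd P HP Hper k).
Qed.
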